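(* Let $V$ be a real vector space of dimension $m$, $\Gamma$ a finitely generated free abelian dense subgroup of $V$ acting by translations, and $\mathcal C$ a countable $\Gamma$-invariant collection of affine hyperplanes of $V$ with finitely many $\Gamma$-orbits and normals spanning $V$. Let $\mathcal W=\{W_1,\dots,W_f\}\subset\mathcal C$ with $f>m$ such that the set of normal directions of $W_1,\dots,W_f$ is indecomposable. Suppose that $\mathcal P$ consists of finitely many $\Gamma$-orbits. Then for every $0\le l\le m$ and every $A\in\mathcal I_l$, $$\mathrm{rk}\,\Gamma^A=l\,\frac{\mathrm{rk}\,\Gamma}{\dim V}.$$ In particular $\dim V$ divides $\mathrm{rk}\,\Gamma$.
   Context: $\mathcal P$ is the set of points that are $0$-dimensional intersections of $m$ elements of $\mathcal C$. For $A\subset\{1,\dots,f\}$, $W_A=\bigcap_{i\in A}W_i$, and $\Gamma^A\subset\Gamma$ is the stabilizer of $W_A$ (those $\gamma$ with $W_A+\gamma=W_A$). $\mathcal I_l$ is the collection of subsets $A\subset\{1,\dots,f\}$ with $m-l$ elements such that $W_A$ has dimension $l$. A finite set of pairwise non-parallel nonzero vectors spanning $V$ is indecomposable if it admits no partition $A_1\cup A_2$ into nonempty parts with $\mathrm{span}(A_1)\cap\mathrm{span}(A_2)=0$. *)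

From HB Require Import structures.
From mathcomp Require Import all_boot all_order all_algebra.
From mathcomp Require Import all_classical all_reals topology num_topology matrix_topology.
Import numFieldTopology.Exports.
Set Implicit Arguments. Unset Strict Implicit. Unset Printing Implicit Defensive.
Import Order.TTheory GRing.Theory Num.Theory.
Local Open Scope ring_scope.
Local Open Scope classical_set_scope.

(* V = R^m, realised as row vectors 'rV[R]_m. *)

Definition dotv (R : realType) (m : nat) (x y : 'rV[R]_m) : R := (x *m y^T) 0 0.

Definition is_normal (R : realType) (m : nat) (W : set 'rV[R]_m) (n : 'rV[R]_m) :=
  n != 0 /\ exists c : R, W = [set x | dotv x n = c].

Definition affine_hyperplane (R : realType) (m : nat) (W : set 'rV[R]_m) :=
  exists n, is_normal W n.

Definition translate (R : realType) (m : nat) (W : set 'rV[R]_m) (g : 'rV[R]_m) :=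
  [set x + g | x in W].

Definition zcomb (R : realType) (m k : nat) (gs : 'I_k -> 'rV[R]_m) (c : 'I_k -> int) :=
  \sum_(i < k) gs i *~ c i.

Definition zfree (R : realType) (m k : nat) (gs : 'I_k -> 'rV[R]_m) :=
  forall c : 'I_k -> int, zcomb gs c = 0 -> forall i, c i = 0.

Definition fg_free_subgroup (R : realType) (m : nat) (G : set 'rV[R]_m) :=
  exists k (gs : 'I_k -> 'rV[R]_m), zfree gs /\
    G = [set x | exists c : 'I_k -> int, x = zcomb gs c].

Definition is_rank (R : realType) (m : nat) (G : set 'rV[R]_m) (r : nat) :=
  (exists gs : 'I_r -> 'rV[R]_m, (forall i, G (gs i)) /\ zfree gs) /\
  (forall k (gs : 'I_k -> 'rV[R]_m), (forall i, G (gs i)) -> zfree gs -> (k <= r)%N).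

Definition affdim (R : realType) (m : nat) (S : set 'rV[R]_m) (l : nat) :=
  exists (p : 'rV[R]_m) (U : 'M[R]_m), \rank U = l /\ S = [set x | (x - p <= U)%MS].

(* A partition of the set of directions lifts to a partition S, ~: S of the
   indices; partitions of indices that split a class of parallel vectors have
   automatically nontrivially intersecting spans, so quantifying over all index
   partitions is the same as quantifying over partitions of the directions. *)
Definition span_rows (R : realType) (f m : nat) (ns : 'M[R]_(f, m)) (S : {set 'I_f}) :=
  (\sum_(i in S) <<row i ns>>)%MS.

Definition indecomposable (R : realType) (f m : nat) (ns : 'M[R]_(f, m)) :=
  (forall i, row i ns != 0) /\ row_full ns /\
  forall S : {set 'I_f}, (0 < #|S|)%N -> (#|S| < f)%N ->
    (span_rows ns S :&: span_rows ns (~: S))%MS != 0.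

Definition WA (R : realType) (m f : nat) (W : 'I_f -> set 'rV[R]_m) (A : {set 'I_f}) :=
  [set x | forall i, i \in A -> W i x].

Definition stabA (R : realType) (m f : nat) (G : set 'rV[R]_m)
  (W : 'I_f -> set 'rV[R]_m) (A : {set 'I_f}) :=
  [set g | G g /\ translate (WA W A) g = WA W A].

Definition Icoll (R : realType) (m f : nat) (W : 'I_f -> set 'rV[R]_m) (l : nat) :=
  [set A : {set 'I_f} | #|A| = (m - l)%N /\ affdim (WA W A) l].

Definition Ppoints (R : realType) (m : nat) (C : set (set 'rV[R]_m)) :=
  [set p | exists Ws : 'I_m -> set 'rV[R]_m,
     (forall i, C (Ws i)) /\ [set x | forall i, Ws i x] = [set p]].

Definition fin_orbits_sets (R : realType) (m : nat) (G : set 'rV[R]_m)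
  (C : set (set 'rV[R]_m)) :=
  exists (k : nat) (reps : 'I_k -> set 'rV[R]_m),
    forall W, C W -> exists i g, G g /\ W = translate (reps i) g.

Definition fin_orbits_points (R : realType) (m : nat) (G : set 'rV[R]_m)
  (P : set 'rV[R]_m) :=
  exists (k : nat) (reps : 'I_k -> 'rV[R]_m),
    forall p, P p -> exists i g, G g /\ p = reps i + g.

(* Write Gamma = (+)_j Z g_j and let ratcomb : Q^k -> V send c to sum_j c_j g_j;
   it is injective because the g_j are Z-independent.  For covectors X, ann X
   is the subspace of those c in Q^k with ratcomb c orthogonal to X.  As W_A is
   a translate of the orthogonal of the normals n_i (i in A), the stabiliser
   Gamma^A is the lattice of integral points of ann (span A), so its rank is
   dim ann (span A).

   Let d_i = k - dim ann n_i (stab_codim).  If B is a basis of normals and i is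
   in B, the points (W_i + N g) /\ (/\_{b in B, b <> i} W_b), for N in nat and
   g in Gamma, all lie in P; two of them differ by an element of Gamma, which
   exhibits (N - N') g in ann n_i + ann (span (B \ i)).  So these two subspaces
   span Q^k and codimensions add along a basis: k - dim ann (span A) is the sum
   of the d_i over A for A inside a basis, and the d_i sum to k over every
   basis.  Basis exchange in an indecomposable family then forces d to be
   constant, so d_i = k / m and rk Gamma^A = k - |A| k / m = l k / m. *)

From HB Require Import structures.
From mathcomp Require Import all_boot all_order all_algebra.
From mathcomp Require Import all_classical all_reals topology num_topology matrix_topology.
From mathcomp Require Import zify.
Import numFieldTopology.Exports.
Import mathcomp.boot.fintype mathcomp.boot.finset.
Set Implicit Arguments. Unset Strict Implicit. Unset Printing Implicit Defensive.
Import Order.TTheory GRing.Theory Num.Theory.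
Local Open Scope ring_scope.

Lemma closed_pred_row_space (F : fieldType) (k : nat) (P : 'rV[F]_k -> Prop) :
  P 0 -> (forall a u v, P u -> P v -> P (a *: u + v)) ->
  exists K : 'M[F]_k, forall v, (v <= K)%MS <-> P v.
Proof.
move=> P0 Plin.
suff grow n (K : 'M[F]_k) : (k - \rank K <= n)%N -> (forall v, (v <= K)%MS -> P v) ->
    exists K : 'M[F]_k, forall v, (v <= K)%MS <-> P v.
  by apply: (grow k 0); [rewrite leq_subr | move=> v; rewrite submx0 => /eqP ->].
elim: n K => [|n IHn] K codimK KP.
  exists K => v; split=> [/KP //|_]; apply: submx_full.
  by rewrite /row_full eqn_leq rank_leq_col -subn_eq0 -leqn0.
have [[v [Pv vNK]]|noP] := pselect (exists v, P v /\ ~ (v <= K)%MS); last first.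
  exists K => v; split=> [/KP //|Pv]; apply: contra_notP noP => vNK; by exists v.
apply: (IHn (K + v)%MS).
  have /rank_ltmx : (K < K + v)%MS.
    rewrite ltmxE addsmxSl; apply/negP => vK; apply: vNK.
    exact: submx_trans (addsmxSr K v) vK.
  by move: codimK; lia.
move=> u /sub_addsmxP [[u1 u2] /= ->].
rewrite [u2]mx11_scalar mul_scalar_mx addrC.
by apply: Plin => //; apply: KP; apply: submxMl.
Qed.

Lemma eqmx_row_subP (F : fieldType) (k m1 m2 : nat)
    (A : 'M[F]_(m1, k)) (B : 'M[F]_(m2, k)) :
  (forall v : 'rV_k, (v <= A)%MS <-> (v <= B)%MS) -> (A :=: B)%MS.
Proof.
move=> AB; apply/eqmxP/andP; split; apply/row_subP => i; apply/AB => //; exact: row_sub.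
Qed.

Definition rowz (k : nat) (z : 'I_k -> int) : 'rV[rat]_k := \row_j (z j)%:~R.

Lemma rat_row_scale (k : nat) (c : 'rV[rat]_k) :
  exists (q : rat) (z : 'I_k -> int), q != 0 /\ q *: c = rowz z.
Proof.
exists (\prod_j (denq (c 0 j))%:~R).
exists (fun j => numq (c 0 j) * \prod_(j' | j' != j) denq (c 0 j')).
split; first by apply/prodf_neq0 => j _; rewrite intr_eq0 denq_neq0.
apply/rowP => j; rewrite !mxE (bigD1 j) //= intrM numqE rmorph_prod /=.
by rewrite mulrC -mulrA.
Qed.

Lemma codim_capmx (F : fieldType) (n : nat) (X Y : 'M[F]_n) :
  row_full (X + Y)%MS -> (n - \rank (X :&: Y) = (n - \rank X) + (n - \rank Y))%N.
Proof.
move=> /eqP XYfull; have := mxrank_sum_cap X Y; rewrite XYfull.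
have := rank_leq_col X; have := rank_leq_col Y; lia.
Qed.

Section Orthogonality.
Variables (R : realType) (m : nat).
Implicit Types (u v w : 'rV[R]_m).

Lemma dotvD u v w : dotv (u + v) w = dotv u w + dotv v w.
Proof. by rewrite /dotv mulmxDl mxE. Qed.

Lemma dotvB u v w : dotv (u - v) w = dotv u w - dotv v w.
Proof. by rewrite /dotv mulmxBl !mxE. Qed.

Lemma dotvZ a u w : dotv (a *: u) w = a * dotv u w.
Proof. by rewrite /dotv -scalemxAl mxE. Qed.

Lemma dotvMn u w n : dotv (u *+ n) w = dotv u w *+ n.
Proof. by rewrite -scaler_nat dotvZ mulr_natl. Qed.

Lemma mulmx_trE n u (A : 'M[R]_(n, m)) t : (u *m A^T) 0 t = dotv u (row t A).
Proof. by rewrite /dotv !mxE; apply: eq_bigr => j _; rewrite !mxE. Qed.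

Definition perp u n (X : 'M[R]_(n, m)) : Prop := u *m X^T = 0.

Lemma perpS u n1 n2 (X : 'M_(n1, m)) (Y : 'M_(n2, m)) :
  (X <= Y)%MS -> perp u Y -> perp u X.
Proof. by move=> /submxP [D ->]; rewrite /perp trmx_mul mulmxA => ->; rewrite mul0mx. Qed.

Lemma perp0 u n : perp u (0 : 'M_(n, m)).
Proof. by rewrite /perp trmx0 mulmx0. Qed.

Lemma perp_adds u n1 n2 (X : 'M_(n1, m)) (Y : 'M_(n2, m)) :
  perp u (X + Y)%MS <-> perp u X /\ perp u Y.
Proof.
split=> [uXY | [uX uY]]; first by split; apply: perpS uXY; rewrite ?addsmxSl ?addsmxSr.
apply: (@perpS _ _ _ _ (col_mx X Y)); first by rewrite addsmxE.
by rewrite /perp tr_col_mx mul_mx_row uX uY row_mx0.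
Qed.

Lemma perp_sums u (I : finType) (P : pred I) (X : I -> 'M[R]_m) :
  perp u (\sum_(i | P i) X i)%MS <-> (forall i, P i -> perp u (X i)).
Proof.
split=> [uX i Pi | uX]; first by apply: perpS uX; apply: (sumsmx_sup i).
by elim/big_ind: _ => [|Y Z uY uZ|i /uX //]; [apply: perp0 | apply/perp_adds].
Qed.

Lemma perp_genmx u v : perp u <<v>>%MS <-> dotv u v = 0.
Proof.
have -> : perp u <<v>>%MS <-> perp u v by split; apply: perpS; rewrite genmxE.
rewrite /perp /dotv; split=> [-> | uv]; first by rewrite mxE.
by rewrite [u *m v^T]mx11_scalar uv raddf0.
Qed.

Lemma perp_full u n (X : 'M_(n, m)) : row_full X -> perp u X -> u = 0.
Proof. by rewrite -sub1mx => /perpS X1 /X1; rewrite /perp trmx1 mulmx1. Qed.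

Lemma perp_span_rows u f (ns : 'M[R]_(f, m)) (A : {set 'I_f}) :
  perp u (span_rows ns A) <-> forall i, i \in A -> dotv u (row i ns) = 0.
Proof.
rewrite /span_rows perp_sums.
by split=> uA i /uA /perp_genmx.
Qed.

End Orthogonality.

Section RationalSpan.
Variables (R : realType) (m k : nat) (gs : 'I_k -> 'rV[R]_m).

Definition ratcomb (c : 'rV[rat]_k) : 'rV[R]_m := map_mx ratr c *m \matrix_j gs j.

Fact ratcomb_is_linear : linear_for (ratr \; *:%R : rat -> 'rV[R]_m -> _) ratcomb.
Proof. by move=> a u v; rewrite /ratcomb map_mxD map_mxZ mulmxDl -scalemxAl. Qed.

HB.instance Definition _ :=
  GRing.isLinear.Build rat 'rV[rat]_k 'rV[R]_m _ ratcomb ratcomb_is_linear.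

Lemma ratcomb_rowz z : ratcomb (rowz z) = zcomb gs z.
Proof.
rewrite /ratcomb /zcomb mulmx_sum_row; apply: eq_bigr => i _.
by rewrite !mxE ratr_int rowK scaler_int.
Qed.

Lemma zcombB c d : zcomb gs c - zcomb gs d = zcomb gs (fun j => c j - d j).
Proof.
rewrite -!ratcomb_rowz -raddfB; congr ratcomb.
by apply/rowP => j; rewrite !mxE rmorphB.
Qed.

Lemma zcombMz c (z : int) : zcomb gs c *~ z = zcomb gs (fun j => c j * z).
Proof.
rewrite -!ratcomb_rowz -raddfMz; congr ratcomb.
by apply/rowP => j; rewrite -scaler_int !mxE intrM mulrC.
Qed.

Hypothesis gs_free : zfree gs.

Lemma ratcomb_eq0 c : ratcomb c = 0 -> c = 0.
Proof.
move=> c0; have [q [z [q0 qc]]] := rat_row_scale c.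
have /gs_free z0 : zcomb gs z = 0 by rewrite -ratcomb_rowz -qc linearZ /= c0 scaler0.
have /eqP : q *: c = 0 by rewrite qc; apply/rowP => j; rewrite !mxE z0.
by rewrite scaler_eq0 (negbTE q0) => /eqP.
Qed.

Fact perp_ratcomb0 n (X : 'M[R]_(n, m)) : perp (ratcomb 0) X.
Proof. by rewrite /perp raddf0 mul0mx. Qed.

Fact perp_ratcomb_closed n (X : 'M[R]_(n, m)) a c d :
  perp (ratcomb c) X -> perp (ratcomb d) X -> perp (ratcomb (a *: c + d)) X.
Proof.
by rewrite /perp linearP /= mulmxDl -scalemxAl => -> ->; rewrite scaler0 addr0.
Qed.

Definition ann n (X : 'M[R]_(n, m)) : 'M[rat]_k :=
  sval (cid (closed_pred_row_space (perp_ratcomb0 X) (@perp_ratcomb_closed n X))).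

Lemma annP n (X : 'M[R]_(n, m)) c : (c <= ann X)%MS <-> perp (ratcomb c) X.
Proof. by rewrite /ann; case: cid. Qed.

Lemma annS n1 n2 (X : 'M_(n1, m)) (Y : 'M_(n2, m)) : (X <= Y)%MS -> (ann Y <= ann X)%MS.
Proof. by move=> XY; apply/row_subP => i; apply/annP/(perpS XY)/annP/row_sub. Qed.

Lemma ann_adds n1 n2 (X : 'M_(n1, m)) (Y : 'M_(n2, m)) :
  (ann (X + Y)%MS :=: ann X :&: ann Y)%MS.
Proof.
apply: eqmx_row_subP => c; rewrite sub_capmx annP perp_adds.
by split=> [[/annP -> /annP ->] | /andP [/annP cX /annP cY]].
Qed.

Lemma ann_full n (X : 'M_(n, m)) : row_full X -> ann X = 0.
Proof.
move=> Xfull; apply/row_matrixP => i; rewrite row0.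
by apply/ratcomb_eq0/(perp_full Xfull)/annP/row_sub.
Qed.

Lemma rank_ann0 n : \rank (ann (0 : 'M_(n, m))) = k.
Proof.
rewrite -[RHS](mxrank1 rat k); apply/eqmx_rank/eqmxP.
apply: eqmx_row_subP => c.
by rewrite submx1; split=> // _; apply/annP; rewrite /perp trmx0 mulmx0.
Qed.

Lemma zcomb_zcomb n (z : 'I_n -> 'I_k -> int) a :
  zcomb (fun t => zcomb gs (z t)) a = ratcomb (rowz a *m \matrix_t rowz (z t)).
Proof.
rewrite /zcomb mulmx_sum_row raddf_sum; apply: eq_bigr => t _.
by rewrite rowK mxE scaler_int raddfMz /= ratcomb_rowz.
Qed.

Lemma zfree_zcombP n (z : 'I_n -> 'I_k -> int) :
  zfree (fun t => zcomb gs (z t)) <-> row_free (\matrix_t rowz (z t)).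
Proof.
split=> [zfree_z | Zfree a].
  apply/inj_row_free => v vZ; have [q [a [q0 qv]]] := rat_row_scale v.
  have /zfree_z a0 : zcomb (fun t => zcomb gs (z t)) a = 0.
    by rewrite zcomb_zcomb -qv -scalemxAl vZ scaler0 raddf0.
  have /eqP : q *: v = 0 by rewrite qv; apply/rowP => t; rewrite !mxE a0.
  by rewrite scaler_eq0 (negbTE q0) => /eqP.
rewrite zcomb_zcomb => /ratcomb_eq0 /eqP; rewrite mulmx_free_eq0 // => /eqP /rowP a0 t.
by move: (a0 t); rewrite !mxE => /eqP; rewrite intr_eq0 => /eqP.
Qed.

Definition zlattice (K : 'M[rat]_k) : set 'rV[R]_m :=
  fun x => exists z, x = zcomb gs z /\ (rowz z <= K)%MS.

Lemma zlattice_free_family (K : 'M[rat]_k) :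
  exists hs : 'I_(\rank K) -> 'rV[R]_m, (forall t, zlattice K (hs t)) /\ zfree hs.
Proof.
pose B := row_base K.
have /choice [qz qzP] t : exists qz : rat * ('I_k -> int),
    qz.1 != 0 /\ qz.1 *: row t B = rowz qz.2.
  by have [q [z qz]] := rat_row_scale (row t B); exists (q, z).
pose Z := \matrix_t rowz (qz t).2.
have rowZ t : row t Z = (qz t).1 *: row t B by rewrite rowK (qzP t).2.
have ZB : (Z :=: B)%MS.
  apply/eqmxP/andP; split; apply/row_subP => t.
    by rewrite rowZ scalemx_sub ?row_sub.
  by rewrite -[row t B](scalerK (qzP t).1) -rowZ scalemx_sub ?row_sub.
exists (fun t => zcomb gs (qz t).2); split.
  move=> t; exists (qz t).2; split=> //.
  by rewrite -(rowK (fun t => rowz (qz t).2)) -(eq_row_base K) -ZB row_sub.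
by apply/zfree_zcombP; rewrite /row_free ZB; exact: row_base_free.
Qed.

Lemma zlattice_free_le (K : 'M[rat]_k) n (hs : 'I_n -> 'rV[R]_m) :
  (forall t, zlattice K (hs t)) -> zfree hs -> (n <= \rank K)%N.
Proof.
move=> /choice [z zP].
have -> : hs = fun t => zcomb gs (z t) by apply: funext => t; case: (zP t).
move/zfree_zcombP/eqP => <-; apply/mxrankS/row_subP => t.
by rewrite rowK; case: (zP t).
Qed.

Lemma is_rank_zlattice (K : 'M[rat]_k) : is_rank (zlattice K) (\rank K).
Proof. by split; [exact: zlattice_free_family | exact: zlattice_free_le]. Qed.

Lemma is_rank_zspan : is_rank (fun x => exists c, x = zcomb gs c) k.
Proof.
have -> : (fun x => exists c, x = zcomb gs c) = zlattice 1%:M.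
  apply: funext => x; apply: propext.
  by split=> [[c ->] | [c [-> _]]]; exists c; rewrite ?submx1.
by rewrite -[k in is_rank _ k](mxrank1 rat k); apply: is_rank_zlattice.
Qed.

End RationalSpan.

Section Independence.
Variables (R : realType) (f m : nat) (ns : 'M[R]_(f, m)).
Hypothesis ns_nz : forall i, row i ns != 0.
Implicit Types (A B E U : {set 'I_f}).
Local Notation span := (span_rows ns).

Definition indep A := \rank (span A) = #|A|.

Lemma row_sub_span i A : i \in A -> (row i ns <= span A)%MS.
Proof. by move=> iA; apply: (sumsmx_sup i) => //; rewrite genmxE. Qed.

Lemma span_rowsP A n (X : 'M_(n, m)) :
  reflect (forall i, i \in A -> (row i ns <= X)%MS) (span A <= X)%MS.
Proof.
by apply: (iffP sumsmx_subP) => AX i /AX; rewrite genmxE.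
Qed.

Lemma span_rowsS A B : A \subset B -> (span A <= span B)%MS.
Proof. by move=> /subsetP AB; apply/span_rowsP => i /AB; apply: row_sub_span. Qed.

Lemma span_rows0 : span set0 = 0.
Proof. by rewrite /span_rows big_set0. Qed.

Lemma span_rowsU1 i A : i \notin A -> span (i |: A) = (<<row i ns>> + span A)%MS.
Proof. by move=> iA; rewrite /span_rows big_setU1. Qed.

Lemma rank_span_rows_le A : (\rank (span A) <= #|A|)%N.
Proof.
rewrite -sum1_card /span_rows; elim/big_rec2: _ => [|i r X _ rX]; first by rewrite mxrank0.
apply: leq_trans (mxrank_adds_leqif _ _) _.
by rewrite mxrank_gen rank_rV ns_nz leq_add2l.
Qed.

Lemma indep0 : indep set0.
Proof. by rewrite /indep span_rows0 mxrank0 cards0. Qed.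

Lemma indepS A B : indep B -> A \subset B -> indep A.
Proof.
rewrite /indep => Bind AB; apply/eqP; rewrite eqn_leq rank_span_rows_le /=.
have BE : span B = (span A + span (B :\: A))%MS.
  by rewrite /span_rows (big_setID A) /= (setIidPr AB).
have := mxrank_adds_leqif (span A) (span (B :\: A)); rewrite -BE Bind => -[le _].
have := leq_trans le (leq_add (leqnn _) (rank_span_rows_le (B :\: A))).
by rewrite -[in X in (X <= _)%N](cardsID A B) (setIidPr AB) leq_add2r.
Qed.

Lemma indepU1 i A : indep A -> ~~ (row i ns <= span A)%MS -> indep (i |: A).
Proof.
rewrite /indep => Aind iNA.
have iA : i \notin A by apply: contra iNA => /row_sub_span.
rewrite span_rowsU1 // cardsU1 iA -Aind.
have := mxrank_sum_cap <<row i ns>>%MS (span A).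
have := mxrank_leqif_sup (capmxSl <<row i ns>>%MS (span A)).
rewrite mxrank_gen rank_rV ns_nz => -[le eq].
have : \rank (<<row i ns>> :&: span A)%MS != 1%N.
  rewrite eq; apply: contra iNA => sub.
  by rewrite -genmxE; apply: submx_trans sub _; apply: capmxSr.
lia.
Qed.

Lemma indep_ext A U : A \subset U -> indep A ->
  exists B, [/\ A \subset B, B \subset U, indep B & (span U <= span B)%MS].
Proof.
move: {2}#|U :\: A| (leqnn #|U :\: A|) => n; elim: n A => [|n IHn] A UA AU Aind.
  exists A; split=> //; apply/span_rowsP => i iU; apply: row_sub_span.
  move: UA; rewrite leqn0 cards_eq0 => /eqP /setP /(_ i).
  by rewrite !inE iU andbT => /negbFE.
have [[i [iU iNA]] | spanA] := pselect (exists i, i \in U /\ ~~ (row i ns <= span A)%MS).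
  have iA : i \notin A by apply: contra iNA => /row_sub_span.
  have [|||B [iAB BU Bind UB]] := IHn (i |: A); last 1 first.
  - by exists B; split=> //; apply: subset_trans iAB; apply: subsetUr.
  - rewrite -ltnS; apply: leq_trans UA; apply: proper_card.
    by rewrite setUC -setDDl; apply: properD1; rewrite !inE iU iA.
  - by rewrite subUset sub1set iU.
  - exact: indepU1.
exists A; split=> //; apply/span_rowsP => i iU.
by apply: contra_notT spanA => iNA; exists i.
Qed.

Section Bases.
Hypothesis ns_full : row_full ns.

Definition row_basis B := indep B /\ row_full (span B).

Lemma basis_card B : row_basis B -> #|B| = m.
Proof. by move=> [<- /eqP]. Qed.

Lemma row_full_span_rows n (X : 'M_(n, m)) :
  (forall i, (row i ns <= X)%MS) -> row_full X.
Proof. by move=> /row_subP nsX; rewrite -sub1mx (submx_trans _ nsX) ?sub1mx. Qed.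

Lemma basis_of_full B : row_full (span B) -> (#|B| <= m)%N -> row_basis B.
Proof.
move=> Bfull Bm; split=> //; apply/eqP.
by rewrite eqn_leq rank_span_rows_le (eqP Bfull) Bm.
Qed.

Lemma indep_basis A : indep A -> exists2 B : {set 'I_f}, A \subset B & row_basis B.
Proof.
move=> Aind; have [B [AB _ Bind TB]] := indep_ext (subsetT A) Aind.
exists B => //; split=> //; apply: row_full_span_rows => i.
by apply: submx_trans TB; apply: row_sub_span; rewrite inE.
Qed.

Lemma basis_exchange B E j : row_basis B -> E \subset B -> ~~ (row j ns <= span E)%MS ->
  exists i, [/\ i \in B :\: E, j \notin B :\ i & row_basis (j |: (B :\ i))].
Proof.
move=> Bbasis EB jNE; have jE : j \notin E by apply: contra jNE => /row_sub_span.
have [jB | jNB] := boolP (j \in B).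
  by exists j; rewrite setD1K // !inE eqxx jB jE.
have jEind := indepU1 (indepS Bbasis.1 EB) jNE.
have [B2 [jEB2 B2jB B2ind jBB2]] := indep_ext (setUS [set j] EB) jEind.
have B2full : row_full (span B2).
  apply: row_full_span_rows => i; apply: submx_trans jBB2.
  by apply: submx_trans (span_rowsS (subsetUr [set j] B)); rewrite submx_full // Bbasis.2.
have /subsetPn [i iB iNB2] : ~~ (B \subset B2).
  apply/negP => BB2; have : j |: B \subset B2.
    by rewrite subUset BB2 andbT sub1set (subsetP jEB2) // !inE eqxx.
  move/subset_leq_card; rewrite cardsU1 jNB (basis_card Bbasis).
  by rewrite (basis_card (conj B2ind B2full)) add1n ltnn.
exists i; split.
- rewrite !inE iB andbT; apply: contra iNB2 => iE.
  by apply: (subsetP jEB2); rewrite !inE iE orbT.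
- by rewrite !inE (negbTE jNB) andbF.
have B2sub : B2 \subset j |: (B :\ i).
  apply/subsetP => x xB2; move: (subsetP B2jB x xB2); rewrite !inE.
  case: eqP => //= _ xB; rewrite xB andbT; apply/eqP => xi.
  by move: iNB2; rewrite -xi xB2.
apply: basis_of_full.
  apply: row_full_span_rows => i'; apply: submx_trans (span_rowsS B2sub).
  exact: submx_full.
by rewrite cardsU1 -(basis_card Bbasis) (cardsD1 i B) iB leq_add2r leq_b1.
Qed.

Lemma basis_sum_exchange (d : 'I_f -> nat) s B E j :
  (forall B, row_basis B -> (\sum_(i in B) d i = s)%N) ->
  row_basis B -> E \subset B -> ~~ (row j ns <= span E)%MS ->
  exists2 i, i \in B :\: E & d j = d i.
Proof.
move=> dB Bbasis EB jNE; have [i [iBE jNBi B'basis]] := basis_exchange Bbasis EB jNE.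
have iB : i \in B by move: iBE; rewrite inE => /andP [].
exists i => //; apply/eqP; rewrite -(eqn_add2r (\sum_(i' in B :\ i) d i')).
by rewrite -big_setU1 //= -(big_setD1 i iB) /= dB ?dB.
Qed.

Lemma span_rows_capC_eq0 S : (\rank (span S) + \rank (span (~: S)) <= m)%N ->
  (span S :&: span (~: S))%MS == 0.
Proof.
move=> rank_le; have full : \rank (span S + span (~: S))%MS = m.
  apply/eqP; apply: row_full_span_rows => i; have [iS | iNS] := boolP (i \in S).
    by apply: submx_trans (addsmxSl _ _); apply: row_sub_span.
  by apply: submx_trans (addsmxSr _ _); apply: row_sub_span; rewrite inE.
rewrite -mxrank_eq0 -leqn0 -(leq_add2l (\rank (span S + span (~: S)))).
by rewrite mxrank_sum_cap full addn0.
Qed.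

End Bases.
End Independence.

Lemma indecomposable_basis_sum_const (R : realType) (f m : nat) (ns : 'M[R]_(f, m))
    (d : 'I_f -> nat) (s : nat) :
  indecomposable ns -> (forall B, row_basis ns B -> (\sum_(i in B) d i = s)%N) ->
  forall i j, d i = d j.
Proof.
move=> [ns_nz [ns_full sep]] dB i0 j0; apply/eqP; apply: contraT => d_ne.
(* The level set S of d through i0 would split the family into two parts with
   independent spans. *)
pose S := [set j | d j == d i0].
have [BX [_ BXS BXind SBX]] := indep_ext ns_nz (sub0set S) (@indep0 _ _ _ ns).
have [B BXB Bbasis] := indep_basis ns_nz ns_full BXind.
pose E := B :\: BX.
have notS_E j : j \notin S -> (row j ns <= span_rows ns E)%MS.
  move=> jS; apply: contraNT jS => jNE; rewrite inE.
  have [i iBE ->] := basis_sum_exchange ns_nz ns_full dB Bbasis (subsetDl B BX) jNE.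
  have iBX : i \in BX by move: iBE; rewrite setDDr setDv set0U inE => /andP [].
  by move: (subsetP BXS i iBX); rewrite inE.
have rank_notS : (\rank (span_rows ns (~: S)) <= #|E|)%N.
  rewrite -(indepS ns_nz Bbasis.1 (subsetDl B BX)).
  by apply/mxrankS/span_rowsP => j; rewrite inE; apply: notS_E.
have rank_S : (\rank (span_rows ns S) <= #|BX|)%N by rewrite -BXind mxrankS.
have S_gt0 : (0 < #|S|)%N by apply/card_gt0P; exists i0; rewrite inE.
have S_lt : (#|S| < f)%N.
  rewrite -[X in (_ < X)%N]card_ord -cardsT proper_card // properT.
  apply/negP => /eqP ST; have := in_setT j0.
  by rewrite -ST inE eq_sym (negbTE d_ne).
have rank_le : (\rank (span_rows ns S) + \rank (span_rows ns (~: S)) <= m)%N.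
  apply: leq_trans (leq_add rank_S rank_notS) _.
  by rewrite -[X in (_ <= X)%N](basis_card Bbasis) -(cardsID BX B) (setIidPr BXB).
by move: (sep S S_gt0 S_lt); rewrite (span_rows_capC_eq0 ns_full rank_le).
Qed.

Section CodimensionAlongBases.
Variables (R : realType) (m k f : nat) (gs : 'I_k -> 'rV[R]_m) (ns : 'M[R]_(f, m)).
Local Notation span := (span_rows ns).

Definition stab_codim i := (k - \rank (ann gs <<row i ns>>%MS))%N.

Hypothesis ann_transversal : forall B i, row_basis ns B -> i \in B ->
  row_full (ann gs <<row i ns>>%MS + ann gs (span (B :\ i)))%MS.

Lemma codim_ann_span (B A : {set 'I_f}) : row_basis ns B -> A \subset B ->
  (k - \rank (ann gs (span A)) = \sum_(i in A) stab_codim i)%N.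
Proof.
move=> Bbasis; move: {2}#|A| (erefl #|A|) => n; elim: n A => [|n IHn] A cardA AB.
  by rewrite (cards0_eq cardA) span_rows0 rank_ann0 subnn big_set0.
have [i iA] : exists i, i \in A by apply/card_gt0P; rewrite cardA.
have iNAi : i \notin A :\ i by rewrite !inE eqxx.
have AiB : A :\ i \subset B by apply: subset_trans AB; apply: subsetDl.
rewrite -(setD1K iA) span_rowsU1 // big_setU1 //= ann_adds codim_capmx.
  by rewrite IHn //; apply/eqP; rewrite -eqSS -cardA (cardsD1 i A) iA add1n.
have BiAi : (ann gs (span (B :\ i)) <= ann gs (span (A :\ i)))%MS.
  by apply/annS/span_rowsS/setSD.
rewrite -sub1mx; apply: submx_trans (addsmxS (submx_refl _) BiAi).
by rewrite sub1mx; apply: ann_transversal (subsetP AB i iA).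
Qed.

Lemma codim_sum_basis (B : {set 'I_f}) : zfree gs -> row_basis ns B ->
  (\sum_(i in B) stab_codim i = k)%N.
Proof.
move=> gs_free Bbasis; rewrite -(codim_ann_span Bbasis (subxx B)).
by rewrite ann_full // ?Bbasis.2 // mxrank0 subn0.
Qed.

End CodimensionAlongBases.

Local Open Scope classical_set_scope.

Lemma translateP (R : realType) (m : nat) (H : set 'rV[R]_m) g x :
  translate H g x <-> H (x - g).
Proof.
split=> [[y Hy <-] | Hxg]; first by rewrite addrK.
by exists (x - g) => //; rewrite subrK.
Qed.

Lemma enum_set_ord (T : finType) (B : {set T}) (n : nat) : #|B| = n ->
  exists e : 'I_n -> T, (forall t, e t \in B) /\ (forall j, j \in B -> exists t, e t = j).
Proof.
move=> cardB; exists (fun t => enum_val (cast_ord (esym cardB) t)).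
split=> [t | j jB]; first exact: enum_valP.
by exists (cast_ord cardB (enum_rank_in jB j)); rewrite cast_ordK enum_rankK_in.
Qed.

Lemma fin_orbits_points_diff (R : realType) (m : nat) (G P : set 'rV[R]_m)
    (p : nat -> 'rV[R]_m) :
  fin_orbits_points G P -> (forall x y, G x -> G y -> G (x - y)) ->
  (forall N, P (p N)) -> exists N1 N2, N1 != N2 /\ G (p N1 - p N2).
Proof.
move=> [r [reps repsP]] GB Pp.
have /choice [o oP] (N : 'I_r.+1) :
    exists o : 'I_r * 'rV[R]_m, G o.2 /\ p N = reps o.1 + o.2.
  by have [t [g [Gg ->]]] := repsP _ (Pp N); exists (t, g).
have /injectivePn [N1 [N2 N12 oN]] : ~~ injectiveb (fun N => (o N).1).
  by apply/injectiveP => /leq_card; rewrite !card_ord ltnn.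
exists (nat_of_ord N1), (nat_of_ord N2); split=> //.
have [G1 ->] := oP N1; have [G2 ->] := oP N2.
by rewrite oN opprD addrACA subrr add0r; apply: GB.
Qed.

Section Hyperplanes.
Variables (R : realType) (m f : nat) (ns : 'M[R]_(f, m)).
Local Notation span := (span_rows ns).

Lemma basis_point B (c : 'I_f -> R) : row_basis ns B ->
  exists p, forall x, (forall j, j \in B -> dotv x (row j ns) = c j) <-> x = p.
Proof.
move=> Bbasis; have [e [eB eonto]] := enum_set_ord (basis_card Bbasis).
pose N := \matrix_t row (e t) ns.
have rowN t : row t N = row (e t) ns by rewrite rowK.
have Nunit : N^T \in unitmx.
  rewrite unitmx_tr -row_full_unit -sub1mx.
  rewrite (submx_trans _ (_ : span B <= N)%MS) ?sub1mx ?Bbasis.2 //.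
  by apply/span_rowsP => j /eonto [t <-]; rewrite -rowN row_sub.
exists ((\row_t c (e t)) *m invmx N^T) => x; split=> [xB | -> j /eonto [t <-]].
  by apply: (canRL (mulmxK Nunit)); apply/rowP => t; rewrite mulmx_trE rowN mxE xB.
by rewrite -rowN -mulmx_trE mulmxKV // mxE.
Qed.

Lemma Ppoints_basis (C : set (set 'rV[R]_m)) (H : 'I_f -> set 'rV[R]_m)
    (c : 'I_f -> R) B :
  row_basis ns B -> (forall j, j \in B -> C (H j)) ->
  (forall j x, j \in B -> H j x <-> dotv x (row j ns) = c j) ->
  exists2 p, Ppoints C p & forall j, j \in B -> H j p.
Proof.
move=> Bbasis CH Hc; have [e [eB eonto]] := enum_set_ord (basis_card Bbasis).
have [p pP] := basis_point c Bbasis; have pB := (pP p).2 erefl.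
exists p; last by move=> j jB; apply/Hc/pB.
exists (H \o e); split=> [t | ]; first exact/CH/eB.
apply/seteqP; split=> [x /= Hx | x /= ->{x} t]; last exact/Hc/pB/eB.
by apply/pP => j /eonto [t <-]; apply/Hc/Hx.
Qed.

End Hyperplanes.

Section Arrangement.
Variables (R : realType) (m k f : nat) (gs : 'I_k -> 'rV[R]_m) (ns : 'M[R]_(f, m)).
Variables (C : set (set 'rV[R]_m)) (W : 'I_f -> set 'rV[R]_m) (cc : 'I_f -> R).
Local Notation Gamma := [set x | exists c, x = zcomb gs c].
Local Notation span := (span_rows ns).
Hypothesis W_eq : forall i, W i = [set x | dotv x (row i ns) = cc i].

Lemma WAP A y : WA W A y <-> forall i, i \in A -> dotv y (row i ns) = cc i.
Proof. by split=> Ay i /Ay; rewrite W_eq. Qed.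

Lemma WA_shift A y g : perp g (span A) -> (WA W A (y + g) <-> WA W A y).
Proof.
move=> /perp_span_rows gA; rewrite !WAP.
by split=> Ay i iA; rewrite -(Ay i iA) dotvD gA // addr0.
Qed.

Lemma WA_perp A p v : WA W A p -> (WA W A (p + v) <-> perp v (span A)).
Proof.
move=> /WAP Ap; rewrite perp_span_rows WAP.
split=> Apv i iA; last by rewrite dotvD Ap // Apv // addr0.
by move: (Apv i iA); rewrite dotvD Ap // -[X in _ = X]addr0 => /addrI.
Qed.

Lemma stabA_zlattice A p : WA W A p -> stabA Gamma W A = zlattice gs (ann gs (span A)).
Proof.
move=> Ap; apply/seteqP; split=> x.
  move=> [[z ->] xA]; exists z; split=> //; apply/annP.
  by rewrite ratcomb_rowz -(WA_perp _ Ap) -xA; exists p.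
move=> [z [-> zA]]; split; first by exists z.
have zA' : perp (zcomb gs z) (span A) by rewrite -ratcomb_rowz; apply/annP.
apply/seteqP; split=> y; first by move/translateP; rewrite -(WA_shift _ zA') subrK.
by move=> Ay; apply/translateP/(WA_shift _ zA'); rewrite subrK.
Qed.

Lemma Icoll_indep l A : Icoll W l A -> indep ns A.
Proof.
move=> [cardA [p [U [rankU WAU]]]].
have Ap : WA W A p by rewrite WAU /= subrr sub0mx.
have : \rank U = (m - \rank (span A))%N.
  rewrite -(mxrank_tr (span A)) -mxrank_ker; apply/eqmx_rank/eqmxP/eqmx_row_subP => v.
  have := WA_perp v Ap; rewrite WAU /= [p + v]addrC addrK => ->.
  by rewrite sub_kermx; split=> [-> | /eqP].
rewrite /indep cardA; have := rank_leq_col (span A); lia.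
Qed.

Hypothesis W_C : forall i, C (W i).
Hypothesis C_inv : forall H g, C H -> Gamma g -> C (translate H g).
Hypothesis P_orbits : fin_orbits_points Gamma (Ppoints C).

Lemma rowz_sub_ann_transversal z B i : row_basis ns B -> i \in B ->
  (rowz z <= ann gs <<row i ns>>%MS + ann gs (span (B :\ i)))%MS.
Proof.
move=> Bbasis iB; set g := zcomb gs z.
pose H N j := if j == i then translate (W j) (g *+ N) else W j.
have H_eq N j x : H N j x <-> dotv x (row j ns) = cc j + (j == i)%:R * dotv (g *+ N) (row j ns).
  rewrite /H; case: eqP => _; last by rewrite W_eq mul0r addr0.
  by rewrite translateP W_eq /= dotvB mul1r; split=> [<- | ->]; rewrite ?subrK ?addrK.
(* p N is the point of (W_i + N g) /\ (/\_{j in B, j <> i} W_j). *)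
have /choice [p pP] N : exists p, Ppoints C p /\ forall j, j \in B -> H N j p.
  have [|p Pp pH] := Ppoints_basis (C := C) Bbasis _ (fun j x _ => H_eq N j x).
    move=> j _; rewrite /H; case: eqP => _ //; apply: C_inv => //.
    by exists (fun j => z j * N%:Z); rewrite pmulrn zcombMz.
  by exists p.
have Gamma_sub x y : Gamma x -> Gamma y -> Gamma (x - y).
  by move=> [a ->] [b ->]; exists (fun j => a j - b j); rewrite zcombB.
have [N1 [N2 [N12 [w pw]]]] :=
  fin_orbits_points_diff P_orbits Gamma_sub (fun N => (pP N).1).
have dot_w j : j \in B ->
    dotv (zcomb gs w) (row j ns) = (j == i)%:R * ((N1%:R - N2%:R) * dotv g (row j ns)).
  move=> jB; have /H_eq h1 := (pP N1).2 j jB; have /H_eq h2 := (pP N2).2 j jB.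
  rewrite -pw dotvB h1 h2 !dotvMn opprD addrACA subrr add0r -mulrBr.
  by rewrite mulrBl !mulr_natl.
pose q : rat := N1%:R - N2%:R.
have q0 : q != 0 by rewrite subr_eq0 eqr_nat.
have w_ann : (rowz w <= ann gs (span (B :\ i)))%MS.
  apply/annP/perp_span_rows => j; rewrite !inE => /andP [ji jB].
  by rewrite ratcomb_rowz dot_w // (negbTE ji) mul0r.
have zw_ann : (q *: rowz z - rowz w <= ann gs <<row i ns>>%MS)%MS.
  apply/annP/perp_genmx; rewrite linearB linearZ /= !ratcomb_rowz dotvB dotvZ dot_w //.
  by rewrite eqxx mul1r /q rmorphB /= !ratr_nat subrr.
rewrite -[rowz z](scalerK q0) scalemx_sub // -(subrK (rowz w) (q *: rowz z)).
exact: addmx_sub_adds.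
Qed.

Lemma ann_transversal B i : row_basis ns B -> i \in B ->
  row_full (ann gs <<row i ns>>%MS + ann gs (span (B :\ i)))%MS.
Proof.
move=> Bbasis iB; rewrite -sub1mx; apply/row_subP => j.
have [q [z [q0 qz]]] := rat_row_scale (row j 1%:M).
by rewrite -[row j _](scalerK q0) qz scalemx_sub // rowz_sub_ann_transversal.
Qed.

End Arrangement.

Theorem mainTheorem6 (R : realType) (m : nat)
  (Gamma : set 'rV[R]_m) (C : set (set 'rV[R]_m))
  (f : nat) (W : 'I_f -> set 'rV[R]_m) :
  (* Gamma: finitely generated free abelian dense subgroup *)
  fg_free_subgroup Gamma ->
  dense Gamma ->
  (* C: countable Gamma-invariant collection of affine hyperplanes *)
  countable C ->
  (forall H, C H -> affine_hyperplane H) ->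
  (forall H g, C H -> Gamma g -> C (translate H g)) ->
  fin_orbits_sets Gamma C ->
  (* normals of elements of C span V *)
  (exists (k : nat) (Hs : 'I_k -> set 'rV[R]_m) (ns : 'M[R]_(k, m)),
      (forall i, C (Hs i)) /\ (forall i, is_normal (Hs i) (row i ns)) /\ row_full ns) ->
  (* W = {W_1, ..., W_f} subset of C, f > m *)
  injective W ->
  (forall i, C (W i)) ->
  (m < f)%N ->
  (exists ns : 'M[R]_(f, m),
      (forall i, is_normal (W i) (row i ns)) /\ indecomposable ns) ->
  fin_orbits_points Gamma (Ppoints C) ->
  exists r : nat, is_rank Gamma r /\ (m %| r)%N /\
    forall (l : nat) (A : {set 'I_f}), (l <= m)%N -> Icoll W l A ->
      exists rA : nat, is_rank (stabA Gamma W A) rA /\ (rA * m = l * r)%N.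
Proof.
move=> [k [gs [gs_free ->]]] _ _ _ C_inv _ _ _ W_C mf [ns [ns_normal ns_indec]] P_orbits.
have [cc W_eq] := fin_all_exists (fun i => (ns_normal i).2).
have [ns_nz [ns_full _]] := ns_indec.
have transversal := ann_transversal W_eq W_C C_inv P_orbits.
have codim_basis B : row_basis ns B -> (\sum_(i in B) stab_codim gs ns i = k)%N.
  exact: (codim_sum_basis transversal gs_free).
pose dv := stab_codim gs ns (Ordinal mf).
have codim_dv i : stab_codim gs ns i = dv.
  exact: indecomposable_basis_sum_const ns_indec codim_basis i (Ordinal mf).
have sum_dv (B : {set 'I_f}) : (\sum_(i in B) stab_codim gs ns i = #|B| * dv)%N.
  by rewrite (eq_bigr (fun=> dv)) ?sum_nat_const // => i _; apply: codim_dv.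
have [B0 _ B0basis] := indep_basis ns_nz ns_full (@indep0 _ _ _ ns).
have k_eq : k = (m * dv)%N by rewrite -(codim_basis _ B0basis) sum_dv (basis_card B0basis).
exists k; split; first exact: is_rank_zspan.
split=> [|l A lm AI]; first by rewrite k_eq dvdn_mulr.
have [B AB Bbasis] := indep_basis ns_nz ns_full (Icoll_indep W_eq AI).
have [_ [p [U [_ WAU]]]] := AI; have Ap : WA W A p by rewrite WAU /= subrr sub0mx.
exists (\rank (ann gs (span_rows ns A))); split.
  by rewrite (stabA_zlattice gs W_eq Ap); apply: is_rank_zlattice.
have := codim_ann_span transversal Bbasis AB; rewrite sum_dv AI.1.
move: (\rank (ann gs (span_rows ns A))) (rank_leq_col (ann gs (span_rows ns A))) => r r_le.
rewrite k_eq in r_le *; rewrite mulnBl => /eqP.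
rewrite eqn_sub2lE ?leq_mul // => /eqP ->.
by rewrite mulnAC mulnA.
Qed.
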